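(* $\mu(\mathit{CCC}_3)=6$; e.g., $\{[0,100],[1,110],[1,000],[0,001],[1,111],[0,011]\}$ is a mutual-visibility set of $\mathit{CCC}_3$.
   Context: Binary strings $x=x_0x_1\cdots x_{d-1}$ have positions $0,\dots,d-1$ from left to right; $x(i)$ denotes $x$ with bit $i$ complemented. $\mathit{CCC}_d$ ($d\ge 3$) has vertex set $\{[\ell,x]:\ell\in\{0,\dots,d-1\},\ x\in\{0,1\}^d\}$; $[\ell,x]$ and $[\ell',x']$ are adjacent iff either $x=x'$ and $\ell'\equiv\ell\pm1\pmod d$, or $\ell=\ell'$ and $x'=x(\ell)$. For a connected graph $G$ and $X\subseteq V(G)$, two vertices $x,y$ are $X$-visible if some shortest $x,y$-path has no internal vertex in $X$; $X$ is a mutual-visibility set if every two vertices of $X$ are $X$-visible; $\mu(G)$ is the maximum size of a mutual-visibility set. *)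

From mathcomp Require Import all_boot.
From mathcomp Require Import boolp.
Set Implicit Arguments. Unset Strict Implicit. Unset Printing Implicit Defensive.

(* Vertices of CCC_d: pairs [l, x] with l : 'I_d and x a binary string of
   length d, encoded as a finite function 'I_d -> bool (x i = bit at position i). *)
Definition ccc_vertex (d : nat) : finType := ('I_d * {ffun 'I_d -> bool})%type.

Definition flip (d : nat) (x : {ffun 'I_d -> bool}) (i : 'I_d) : {ffun 'I_d -> bool} :=
  [ffun j => if j == i then ~~ x j else x j].

Definition ccc_adj (d : nat) : rel (ccc_vertex d) :=
  fun u v =>
    ((u.2 == v.2) &&
      ((nat_of_ord v.1 == (u.1 + 1) %% d) || (nat_of_ord u.1 == (v.1 + 1) %% d)))
    || ((u.1 == v.1) && (v.2 == flip u.2 u.1)).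

Section Visibility.
Variable T : finType.
Variable e : rel T.

(* a walk from x is a sequence p with path e x p; it ends at last x p and has
   length size p.  Its internal vertices are all vertices except x and last. *)
Definition internal (x : T) (p : seq T) : seq T := behead (belast x p).

Definition shortest_path (x y : T) (p : seq T) : bool :=
  [&& path e x p, last x p == y &
      [forall n : 'I_(size p), ~~ [exists q : n.-tuple T,
          path e x q && (last x q == y)]]].

Definition visible (X : {set T}) (x y : T) : Prop :=
  exists p, shortest_path x y p /\ all (fun v => v \notin X) (internal x p).

Definition mutual_visibility (X : {set T}) : Prop :=
  forall x y, x \in X -> y \in X -> visible X x y.

Definition mu : nat :=
  \max_(X : {set T} | `[< mutual_visibility X >]) #|X|.
End Visibility.

Definition bits3 (b0 b1 b2 : bool) : {ffun 'I_3 -> bool} :=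
  [ffun i : 'I_3 => nth false [:: b0; b1; b2] i].

Definition v3 (l : nat) (b0 b1 b2 : bool) : ccc_vertex 3 :=
  (inord l, bits3 b0 b1 b2).

(* The upper bound is a certified exhaustive search.  Vertices [l, x] of CCC_3
   are encoded as the numbers l + 3 * (x_0 + 2 x_1 + 4 x_2) < 24; in this model
   all geodesics between two vertices are enumerated, so X-visibility becomes a
   boolean test on the list of their interiors.  Mutual visibility is inherited
   by subsets, so a backtracking search over increasing sequences, pruning every
   prefix that fails the test, proves that no 7 vertices are mutually visible.
   Since visibility is symmetric, the test only needs each unordered pair once.
   The lower bound is the same test run on the six given vertices. *)
From mathcomp Require Import all_boot.
From mathcomp Require Import boolp zify.
Set Implicit Arguments. Unset Strict Implicit. Unset Printing Implicit Defensive.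

Lemma pairwise_mem (A : eqType) (r : rel A) s a b :
  pairwise r s -> a \in s -> b \in s -> a != b -> r a b || r b a.
Proof.
elim: s => //= z s IH /andP[/allP r_z r_s].
rewrite !inE => /predU1P[-> | a_s] /predU1P[-> | b_s] //; rewrite ?eqxx //.
- by rewrite r_z.
- by rewrite r_z ?orbT.
- exact: IH.
Qed.

Lemma pairwise_in2 (A : eqType) (r : rel A) s :
  {in s &, forall a b, r a b} -> pairwise r s.
Proof.
elim: s => //= a s IH r_s; apply/andP; split.
  by apply/allP => b bs; apply: r_s; rewrite !inE ?eqxx ?bs ?orbT.
by apply: IH => b c bs cs; apply: r_s; rewrite inE ?bs ?cs orbT.
Qed.

Section Visibility.
Variables (T : finType) (e : rel T).
Implicit Types (x y : T) (p : seq T) (X : {set T}).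

Definition has_walk (k : nat) (x y : T) : bool :=
  [exists q : k.-tuple T, path e x q && (last x q == y)].

Lemma visible_refl X x : visible e X x x.
Proof. by exists [::]; split=> //; apply/and3P; split=> //; apply/forallP => -[]. Qed.

Lemma mu_eq k (X0 : {set T}) :
  (forall X, mutual_visibility e X -> #|X| <= k) ->
  mutual_visibility e X0 -> k <= #|X0| -> mu e = k.
Proof.
move=> mv_le mvX0 k_le; apply/eqP; rewrite eqn_leq; apply/andP; split.
  by apply/bigmax_leqP => X /asboolP; apply: mv_le.
apply: leq_trans k_le _; apply: (leq_bigmax_cond (F := fun X : {set T} => #|X|)).
exact/asboolP.
Qed.

Hypothesis e_sym : symmetric e.

Lemma rev_walk x p : path e x p -> path e (last x p) (rev (belast x p)).
Proof.
by move=> p_xp; rewrite rev_path; apply: sub_path p_xp => u v /=; rewrite e_sym.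
Qed.

Lemma last_rev_walk x p : last (last x p) (rev (belast x p)) = x.
Proof. by case: p => //= y p; rewrite rev_cons last_rcons. Qed.

Lemma internal_rev_walk x p :
  internal (last x p) (rev (belast x p)) = rev (internal x p).
Proof. by case: p => //= y p; rewrite rev_cons /internal belast_rcons. Qed.

Lemma has_walk_sym k x y : has_walk k x y -> has_walk k y x.
Proof.
case/existsP => q /andP[q_path /eqP q_last].
have size_rq : size (rev (belast x q)) == k by rewrite size_rev size_belast size_tuple.
apply/existsP; exists (Tuple size_rq).
by rewrite /= -q_last rev_walk // last_rev_walk eqxx.
Qed.

Lemma visible_sym X x y : visible e X x y -> visible e X y x.
Proof.
case=> p [/and3P[p_path /eqP p_last /forallP p_min] p_int].
exists (rev (belast x p)); split; last by rewrite -p_last internal_rev_walk all_rev.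
apply/and3P; split; first by rewrite -p_last rev_walk.
  by rewrite -p_last last_rev_walk.
apply/forallP => -[m /=]; rewrite size_rev size_belast => m_lt.
exact: contra (@has_walk_sym m y x) (p_min (Ordinal m_lt)).
Qed.

Lemma mutual_visibility_pairwise (r : rel T) (X : {set T}) (s : seq T) :
  {subset X <= s} -> (forall x y, x \in X -> y \in X -> r x y -> visible e X x y) ->
  pairwise r s -> mutual_visibility e X.
Proof.
move=> sub_Xs r_vis r_s x y xX yX.
have [-> | neq_xy] := eqVneq x y; first exact: visible_refl.
case/orP: (pairwise_mem r_s (sub_Xs _ xX) (sub_Xs _ yX) neq_xy) => [/r_vis | /r_vis].
  by apply.
by move/(_ yX xX); apply: visible_sym.
Qed.

End Visibility.

Section Search.
Variables (A : eqType) (P : pred (seq A)).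
Hypothesis P_subseq : forall s s', subseq s s' -> P s' -> P s.

Fixpoint search (k : nat) (cur rest : seq A) : bool :=
  if k is k'.+1 then
    if rest is v :: rest' then
      (~~ P (v :: cur) || search k' (v :: cur) rest') && search k cur rest'
    else true
  else false.

Lemma search_sound k cur rest t :
  search k cur rest -> subseq t rest -> size t = k -> ~~ P (rev t ++ cur).
Proof.
elim: rest k cur t => [|v rest IH] [|k] cur t //=; first by case: t.
case/andP=> search_v search_rest; case: t => [|w t] //=.
case: ifP => [/eqP -> | _]; last exact: IH.
move=> sub_t [size_t]; rewrite rev_cons cat_rcons.
case/orP: search_v => [notP_v | search_v]; last exact: IH search_v sub_t size_t.
by apply: contra notP_v; apply: P_subseq; apply: suffix_subseq.
Qed.

End Search.

Section WalkEnumeration.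
Variable nbr : nat -> seq nat.
Local Notation adj := (fun a b => b \in nbr a).

Fixpoint walks (k a : nat) : seq (seq nat) :=
  if k is k'.+1 then [seq b :: q | b <- nbr a, q <- walks k' b] else [:: [::]].

Lemma mem_walks k a q : (q \in walks k a) = (size q == k) && path adj a q.
Proof.
elim: k a q => [|k IH] a [|b q] //=; first by apply/negbTE/allpairsPdep => -[? [? []]].
apply/allpairsPdep/idP => [[b' [q' [b'_nbr q'_walk [-> ->]]]] |
                           /and3P[size_q b_nbr q_path]].
  by move: q'_walk; rewrite IH eqSS b'_nbr => /andP[-> ->].
by exists b, q; rewrite IH -eqSS size_q q_path.
Qed.

Definition reach (a b k : nat) : bool := has (fun q => last a q == b) (walks k a).

Variable n : nat.

Definition dist (a b : nat) : nat := find (reach a b) (iota 0 n).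

Lemma dist_le a b k : reach a b k -> dist a b <= k.
Proof.
move=> reach_k; rewrite leqNgt; apply/negP => k_lt.
have k_n : k < n by rewrite (leq_trans k_lt) // -[n](size_iota 0) find_size.
by move: (before_find 0 k_lt); rewrite nth_iota // reach_k.
Qed.

Definition geodesics (a b : nat) : seq (seq nat) :=
  [seq behead (belast a q) | q <- walks (dist a b) a & last a q == b].

Definition geodesic_table : seq (seq (seq (seq nat))) :=
  [seq [seq geodesics a b | b <- iota 0 n] | a <- iota 0 n].

End WalkEnumeration.

Section Encoding.
Variables (T : finType) (e : rel T) (nbr : nat -> seq nat) (n : nat).
Variables (code : T -> nat) (decode : nat -> T).
Hypotheses (codeK : cancel code decode) (code_lt : forall u, code u < n).
Hypothesis decodeK : forall a, a < n -> code (decode a) = a.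
Hypothesis nbr_lt : forall a b, a < n -> b \in nbr a -> b < n.
Hypothesis adj_code : forall u v, e u v = (code v \in nbr (code u)).
Implicit Types (x y : T) (p : seq T) (X : {set T}) (L : seq nat).
Local Notation adj := (fun a b => b \in nbr a).

Lemma code_inj : injective code. Proof. exact: can_inj codeK. Qed.

Lemma path_code x p : path e x p = path adj (code x) (map code p).
Proof. by rewrite path_map; apply: eq_path => u v; apply: adj_code. Qed.

Lemma walk_codes a q : a < n -> path adj a q -> map code (map decode q) = q.
Proof.
elim: q a => //= b q IH a a_lt /andP[b_nbr q_path].
have b_lt := nbr_lt a_lt b_nbr.
by rewrite decodeK // (IH b).
Qed.

Lemma has_walk_code k x y : has_walk e k x y = reach nbr (code x) (code y) k.
Proof.
apply/existsP/hasP => [[q /andP[q_path /eqP q_last]] | [q q_walk /eqP q_last]].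
  exists (map code q); first by rewrite mem_walks size_map size_tuple eqxx -path_code.
  by rewrite last_map q_last.
move: q_walk; rewrite mem_walks => /andP[/eqP size_q q_path].
have codes_q := walk_codes (code_lt x) q_path.
have size_dq : size (map decode q) == k by rewrite size_map size_q.
exists (Tuple size_dq); rewrite /= path_code codes_q q_path /=.
by apply/eqP/code_inj; rewrite -last_map codes_q.
Qed.

Lemma shortest_path_code x y p :
  reach nbr (code x) (code y) (dist nbr n (code x) (code y)) ->
  shortest_path e x y p =
    [&& path e x p, last x p == y & size p == dist nbr n (code x) (code y)].
Proof.
move=> reach_d; apply/and3P/and3P => -[p_path p_last p_min]; split=> //.
  rewrite eqn_leq -has_walk_code in reach_d *; apply/andP; split.
    rewrite leqNgt; apply/negP => d_lt.
    move/forallP: p_min => /(_ (Ordinal d_lt)).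
    by rewrite -/(has_walk e _ x y) reach_d.
  apply: dist_le; rewrite -has_walk_code.
  by apply/existsP; exists (in_tuple p); rewrite p_path.
apply/forallP => m; apply/negP.
rewrite -/(has_walk e m x y) has_walk_code => /(dist_le n).
by rewrite leqNgt -(eqP p_min) ltn_ord.
Qed.

Lemma visible_geodesics X L x y :
  (forall v, (code v \in L) = (v \in X)) ->
  reach nbr (code x) (code y) (dist nbr n (code x) (code y)) ->
  visible e X x y <->
  has (all (fun c => c \notin L)) (geodesics nbr n (code x) (code y)).
Proof.
move=> L_X reach_d.
have internal_code p : all (fun v => v \notin X) (internal x p) =
    all (fun c => c \notin L) (behead (belast (code x) (map code p))).
  by rewrite belast_map behead_map all_map; apply: eq_all => v /=; rewrite L_X.
split=> [[p [] ] | /hasP[_ /mapP[q q_geo ->] q_int]].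
  rewrite shortest_path_code // => /and3P[p_path /eqP p_last size_p] p_int.
  apply/hasP; exists (behead (belast (code x) (map code p)));
    last by rewrite -internal_code.
  apply/mapP; exists (map code p) => //.
  by rewrite mem_filter last_map p_last eqxx mem_walks size_map size_p -path_code.
move: q_geo; rewrite mem_filter mem_walks => /andP[/eqP q_last /andP[size_q q_path]].
have codes_q := walk_codes (code_lt x) q_path.
exists (map decode q); rewrite shortest_path_code // internal_code codes_q q_int.
rewrite path_code codes_q q_path size_map size_q andbT; split=> //.
by apply/eqP/code_inj; rewrite -last_map codes_q.
Qed.

Definition code_image X : seq nat := [seq c <- iota 0 n | decode c \in X].

Lemma mem_code_image X v : (code v \in code_image X) = (v \in X).
Proof. by rewrite /code_image mem_filter codeK mem_iota code_lt !andbT. Qed.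

Lemma code_imageP X c : c \in code_image X -> exists2 v, v \in X & c = code v.
Proof.
rewrite /code_image mem_filter mem_iota => /and3P[dcX _ c_lt].
by exists (decode c); rewrite ?decodeK.
Qed.

Lemma card_code_image X : #|X| <= size (code_image X).
Proof.
rewrite cardE -(size_map code); apply: uniq_leq_size.
  by rewrite (map_inj_uniq code_inj) enum_uniq.
by move=> c /mapP[v vX ->]; rewrite mem_code_image -mem_enum.
Qed.

End Encoding.

(* Membership tests through [indicator] rather than [\in] are what keep the
   exhaustive search below affordable. *)
Definition indicator (L : seq nat) : seq bool :=
  foldr (fun c B => set_nth false B c true) [::] L.

Lemma nth_indicator L c : nth false (indicator L) c = (c \in L).
Proof.
elim: L => [|a L IH] /=; first by rewrite nth_nil.
by rewrite nth_set_nth /= IH inE; case: (c == a).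
Qed.

Definition pairwise_visible (g : nat -> nat -> seq (seq nat)) (L : seq nat) : bool :=
  let B := indicator L in
  pairwise (fun a b => has (all (fun c => ~~ nth false B c)) (g a b)) L.

Lemma pairwise_visibleE g L :
  pairwise_visible g L = pairwise (fun a b => has (all (fun c => c \notin L)) (g a b)) L.
Proof.
apply: eq_pairwise => a b; apply: eq_has => q; apply: eq_all => c.
by rewrite /= nth_indicator.
Qed.

Lemma pairwise_visible_subseq g s s' :
  subseq s s' -> pairwise_visible g s' -> pairwise_visible g s.
Proof.
move=> sub_s; rewrite !pairwise_visibleE => /(subseq_pairwise sub_s).
apply: sub_pairwise => a b; apply: sub_has => q; apply: sub_all => c.
by apply: contra; apply: (mem_subseq sub_s).
Qed.

Lemma flipK d (i : 'I_d) : involutive (fun x : {ffun 'I_d -> bool} => flip x i).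
Proof.
by move=> x; apply/ffunP => j; rewrite !ffunE; case: eqP => // _; rewrite negbK.
Qed.

Lemma ccc_adj_sym d : symmetric (@ccc_adj d).
Proof.
move=> u v; congr (_ || _); first by rewrite eq_sym orbC.
apply/andP/andP => -[/eqP l_eq /eqP x_eq]; split.
- by rewrite l_eq.
- by rewrite x_eq -l_eq flipK.
- by rewrite l_eq.
- by rewrite x_eq l_eq flipK.
Qed.

Local Notation vertex := (ccc_vertex 3).

Definition ord3_0 : 'I_3 := @Ordinal 3 0 isT.
Definition ord3_1 : 'I_3 := @Ordinal 3 1 isT.
Definition ord3_2 : 'I_3 := @Ordinal 3 2 isT.

Lemma ord3_ind (P : 'I_3 -> Prop) : P ord3_0 -> P ord3_1 -> P ord3_2 -> forall i, P i.
Proof.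
move=> P0 P1 P2 [[|[|[|m]]] i_lt] //.
- by rewrite (_ : Ordinal i_lt = ord3_0) //; apply: val_inj.
- by rewrite (_ : Ordinal i_lt = ord3_1) //; apply: val_inj.
- by rewrite (_ : Ordinal i_lt = ord3_2) //; apply: val_inj.
Qed.

Definition bits_code (x : {ffun 'I_3 -> bool}) : nat :=
  x ord3_0 + 2 * x ord3_1 + 4 * x ord3_2.

Definition flip_bit (m l : nat) : nat :=
  if odd (m %/ 2 ^ l) then m - 2 ^ l else m + 2 ^ l.

Definition ccc3_code (u : vertex) : nat := u.1 + 3 * bits_code u.2.

Definition ccc3_decode (a : nat) : vertex :=
  (inord (a %% 3), [ffun i : 'I_3 => odd (a %/ 3 %/ 2 ^ i)]).

Definition ccc3_adjn (a b : nat) : bool :=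
  (a %/ 3 == b %/ 3) && ((b %% 3 == (a %% 3 + 1) %% 3) || (a %% 3 == (b %% 3 + 1) %% 3))
  || (a %% 3 == b %% 3) && (b %/ 3 == flip_bit (a %/ 3) (a %% 3)).

Definition ccc3_adj_lists : seq (seq nat) :=
  [seq [seq b <- iota 0 24 | ccc3_adjn a b] | a <- iota 0 24].

Definition ccc3_nbr (a : nat) : seq nat := nth [::] ccc3_adj_lists a.

Lemma bits_code_lt x : bits_code x < 8.
Proof. by rewrite /bits_code; case: (x ord3_0) (x ord3_1) (x ord3_2) => [] [] []. Qed.

Lemma bits_code_inj : injective bits_code.
Proof.
move=> x y; rewrite /bits_code => eq_xy; apply/ffunP; apply: ord3_ind; move: eq_xy;
  by case: (x ord3_0) (x ord3_1) (x ord3_2) (y ord3_0) (y ord3_1) (y ord3_2)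
       => [] [] [] [] [] []; move/eqP.
Qed.

Lemma bits_code_flip x l : bits_code (flip x l) = flip_bit (bits_code x) l.
Proof.
move: l; apply: ord3_ind; rewrite /bits_code /flip !ffunE /=;
  by case: (x ord3_0) (x ord3_1) (x ord3_2) => [] [] [].
Qed.

Lemma ccc3_code_mod u : ccc3_code u %% 3 = u.1.
Proof.
by rewrite /ccc3_code; have := ltn_ord u.1; move: (nat_of_ord u.1) (bits_code u.2); lia.
Qed.

Lemma ccc3_code_div u : ccc3_code u %/ 3 = bits_code u.2.
Proof.
by rewrite /ccc3_code; have := ltn_ord u.1; move: (nat_of_ord u.1) (bits_code u.2); lia.
Qed.

Lemma ccc3_code_lt u : ccc3_code u < 24.
Proof.
rewrite /ccc3_code; have := bits_code_lt u.2; have := ltn_ord u.1.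
by move: (nat_of_ord u.1) (bits_code u.2); lia.
Qed.

Lemma ccc3_codeK : cancel ccc3_code ccc3_decode.
Proof.
move=> [l x]; rewrite /ccc3_decode ccc3_code_mod ccc3_code_div /=; congr pair.
  by apply: val_inj; rewrite /= inordK.
apply/ffunP; apply: ord3_ind; rewrite !ffunE /bits_code /=;
  by case: (x ord3_0) (x ord3_1) (x ord3_2) => [] [] [].
Qed.

Lemma ccc3_decodeK a : a < 24 -> ccc3_code (ccc3_decode a) = a.
Proof.
move=> a_lt; do 24 (case: a a_lt => [|a] a_lt;
  [by rewrite /ccc3_code /bits_code /ccc3_decode !ffunE /= inordK |]).
by [].
Qed.

Lemma mem_ccc3_nbr a b : a < 24 -> (b \in ccc3_nbr a) = (b < 24) && ccc3_adjn a b.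
Proof.
move=> a_lt; rewrite /ccc3_nbr (nth_map 0) ?size_iota // nth_iota //.
by rewrite mem_filter mem_iota andbC.
Qed.

Lemma ccc3_nbr_lt a b : a < 24 -> b \in ccc3_nbr a -> b < 24.
Proof. by move=> a_lt; rewrite mem_ccc3_nbr // => /andP[]. Qed.

Lemma ccc3_adj_code u v : ccc_adj u v = (ccc3_code v \in ccc3_nbr (ccc3_code u)).
Proof.
rewrite mem_ccc3_nbr ?ccc3_code_lt // /ccc3_adjn !ccc3_code_mod !ccc3_code_div.
by rewrite -bits_code_flip !(inj_eq bits_code_inj).
Qed.

(* As global constants, the tables [ccc3_adj_lists] and [ccc3_geodesic_table] are
   evaluated only once by [vm_compute], which turns [ccc3_geodesics] into a lookup. *)
Definition ccc3_geodesic_table : seq (seq (seq (seq nat))) :=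
  geodesic_table ccc3_nbr 24.

Definition ccc3_geodesics (a b : nat) : seq (seq nat) :=
  nth [::] (nth [::] ccc3_geodesic_table a) b.

Lemma ccc3_connected :
  all (fun a => all (fun b => reach ccc3_nbr a b (dist ccc3_nbr 24 a b)) (iota 0 24))
      (iota 0 24).
Proof. by vm_compute. Qed.

Lemma ccc3_visible (X : {set vertex}) (L : seq nat) (x y : vertex) :
  (forall v, (ccc3_code v \in L) = (v \in X)) ->
  visible (@ccc_adj 3) X x y <->
  has (all (fun c => c \notin L)) (ccc3_geodesics (ccc3_code x) (ccc3_code y)).
Proof.
move=> L_X; have [x_lt y_lt] := (ccc3_code_lt x, ccc3_code_lt y).
rewrite /ccc3_geodesics (nth_map 0) ?size_iota // nth_iota //.
rewrite (nth_map 0) ?size_iota // nth_iota //.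
apply: (visible_geodesics ccc3_codeK ccc3_code_lt ccc3_decodeK ccc3_nbr_lt
          ccc3_adj_code L_X).
by apply: (allP (allP ccc3_connected _ _) _); rewrite mem_iota.
Qed.

Lemma ccc3_no_mutual_visibility7 :
  search (pairwise_visible ccc3_geodesics) 7 [::] (iota 0 24).
Proof. vm_cast_no_check (erefl true). Qed.

Lemma ccc3_mutual_visibility_card (X : {set vertex}) :
  mutual_visibility (@ccc_adj 3) X -> #|X| <= 6.
Proof.
move=> mvX; rewrite leqNgt; apply/negP => X_gt6.
pose t := take 7 (code_image 24 ccc3_decode X).
have t_sub : subseq t (iota 0 24) := subseq_trans (take_subseq _ _) (filter_subseq _ _).
have size_t : size t = 7.
  rewrite size_takel // (leq_trans X_gt6) //.
  exact: card_code_image ccc3_codeK ccc3_code_lt X.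
have := search_sound (@pairwise_visible_subseq ccc3_geodesics)
  ccc3_no_mutual_visibility7 t_sub size_t.
rewrite cats0 pairwise_visibleE; apply/negP/negPn/pairwise_in2 => a b.
rewrite !mem_rev => /mem_take/(code_imageP ccc3_decodeK)[x xX ->].
move=> /mem_take/(code_imageP ccc3_decodeK)[y yX ->].
have /(ccc3_visible _ _ (mem_code_image ccc3_codeK ccc3_code_lt X)) := mvX x y xX yX.
apply: sub_has => q; apply: sub_all => c.
by apply: contra; rewrite mem_rev => /mem_take.
Qed.

Definition ccc3_example : seq vertex :=
  [:: v3 0 true false false; v3 1 true true false; v3 1 false false false;
      v3 0 false false true; v3 1 true true true; v3 0 false true true].

Lemma ccc3_code_v3 l b0 b1 b2 :
  l < 3 -> ccc3_code (v3 l b0 b1 b2) = l + 3 * (b0 + 2 * b1 + 4 * b2).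
Proof. by move=> l_lt; rewrite /ccc3_code /v3 /= inordK // /bits_code !ffunE. Qed.

Lemma ccc3_example_codes : map ccc3_code ccc3_example = [:: 3; 10; 1; 12; 22; 18].
Proof. by rewrite /= !ccc3_code_v3. Qed.

Lemma ccc3_example_mutual_visibility (X : {set vertex}) :
  X =i ccc3_example -> mutual_visibility (@ccc_adj 3) X.
Proof.
move=> X_ex; pose L := [:: 3; 10; 1; 12; 22; 18].
pose R a b := has (all (fun c => c \notin L)) (ccc3_geodesics a b).
have L_X v : (ccc3_code v \in L) = (v \in X).
  by rewrite X_ex -(mem_map (code_inj ccc3_codeK)) ccc3_example_codes.
apply: (mutual_visibility_pairwise (ccc_adj_sym (d:=3)) (r := relpre ccc3_code R)
  (s := ccc3_example)).
- by move=> v; rewrite X_ex.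
- by move=> x y _ _ /(ccc3_visible x y L_X).
by rewrite -pairwise_map ccc3_example_codes; vm_compute.
Qed.

Lemma ccc3_example_card (X : {set vertex}) : X =i ccc3_example -> #|X| = 6.
Proof.
move=> X_ex; rewrite (eq_card X_ex); apply/card_uniqP.
by rewrite -(map_inj_uniq (code_inj ccc3_codeK)) ccc3_example_codes.
Qed.

Theorem mainTheorem9 :
  mu (@ccc_adj 3) = 6 /\
  mutual_visibility (@ccc_adj 3)
    [set v3 0 true false false; v3 1 true true false; v3 1 false false false;
         v3 0 false false true; v3 1 true true true; v3 0 false true true].
Proof.
have X_ex : [set v3 0 true false false; v3 1 true true false; v3 1 false false false;
    v3 0 false false true; v3 1 true true true; v3 0 false true true] =i ccc3_example.
  by move=> v; rewrite !inE !orbA.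
have mvX := ccc3_example_mutual_visibility X_ex.
split=> //; apply: mu_eq ccc3_mutual_visibility_card mvX _.
by rewrite ccc3_example_card.
Qed.
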